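(* Let $f:\mathbb{R}^n_{>0}\to\mathbb{R}^n_{>0}$ be order-preserving and homogeneous. If $r(f^J_0)>\lambda(f^{[n]\setminus J}_\infty)$ for some nonempty proper subset $J\subset[n]$, then $f$ has no eigenvectors in $\mathbb{R}^n_{>0}$.
   Context: $[n]=\{1,\dots,n\}$; entrywise order. Order-preserving: $x\le y\Rightarrow f(x)\le f(y)$; homogeneous: $f(tx)=tf(x)$ for $t>0$. Such $f$ extends continuously to order-preserving homogeneous maps $\mathbb{R}^n_{\ge0}\to\mathbb{R}^n_{\ge0}$ and $(0,\infty]^n\to(0,\infty]^n$, again denoted $f$. For $\alpha\in[-\infty,\infty]$, $J\subseteq[n]$: $P^J_\alpha(x)_j=x_j$ for $j\in J$, $=\alpha$ otherwise; $f^J_0=P^J_0fP^J_0$, $f^J_\infty=P^J_\infty fP^J_\infty$. For $g$ order-preserving homogeneous on $\mathbb{R}^n_{\ge0}$ or $(0,\infty]^n$: $r(g)=\inf_{x\in\mathbb{R}^n_{>0}}\max_i g(x)_i/x_i$, $\lambda(g)=\sup_{x\in\mathbb{R}^n_{>0}}\min_i g(x)_i/x_i$ (values in $[0,\infty]$). *)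

From HB Require Import structures.
From mathcomp Require Import all_boot all_order all_algebra.
From mathcomp Require Import all_classical all_reals all_analysis.
Set Implicit Arguments. Unset Strict Implicit. Unset Printing Implicit Defensive.
Import Order.TTheory GRing.Theory Num.Theory.
Local Open Scope classical_set_scope.
Local Open Scope ring_scope.

Section Defs.
Variables (R : realType) (n : nat).

Definition posv (x : 'I_n -> R) : Prop := forall i, 0 < x i.

Definition maps_pos (f : ('I_n -> R) -> ('I_n -> R)) : Prop :=
  forall x, posv x -> posv (f x).

Definition order_preserving (f : ('I_n -> R) -> ('I_n -> R)) : Prop :=
  forall x y, posv x -> posv y -> (forall i, x i <= y i) ->
  forall i, f x i <= f y i.

Definition homogeneous (f : ('I_n -> R) -> ('I_n -> R)) : Prop :=
  forall (t : R) x, 0 < t -> posv x ->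
  f (fun j => t * x j) = (fun j => t * f x j).

(* continuous extension to R^n_{>=0}: f(x) = lim_{e -> 0+} f(x + e 1)
   = inf_{e > 0} f(x + e 1) (monotone limit) *)
Definition ext0 (f : ('I_n -> R) -> ('I_n -> R)) (x : 'I_n -> R) : 'I_n -> R :=
  fun i => inf [set f (fun j => x j + e) i | e in [set e : R | 0 < e]].

(* continuous extension to (0,oo]^n: f(x) = lim_{t -> oo} f(min(x, t 1))
   = sup_{t > 0} f(min(x, t 1)) (monotone limit), with values in (0,oo] *)
Definition extInf (f : ('I_n -> R) -> ('I_n -> R)) (x : 'I_n -> \bar R)
  : 'I_n -> \bar R :=
  fun i => ereal_sup [set (f (fun j => fine (mine (x j) t%:E)) i)%:E
                     | t in [set t : R | 0 < t]].

Definition P0 (J : {set 'I_n}) (x : 'I_n -> R) : 'I_n -> R :=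
  fun i => if i \in J then x i else 0.
Definition PInf (J : {set 'I_n}) (x : 'I_n -> \bar R) : 'I_n -> \bar R :=
  fun i => if i \in J then x i else +oo%E.

Definition f0 (f : ('I_n -> R) -> ('I_n -> R)) (J : {set 'I_n}) (x : 'I_n -> R)
  : 'I_n -> R := P0 J (ext0 f (P0 J x)).

Definition fInf (f : ('I_n -> R) -> ('I_n -> R)) (J : {set 'I_n})
  (x : 'I_n -> \bar R) : 'I_n -> \bar R := PInf J (extInf f (PInf J x)).

Definition r_nonneg (g : ('I_n -> R) -> ('I_n -> R)) : \bar R :=
  ereal_inf [set (\big[maxe/-oo%E]_i (g x i / x i)%:E)%E | x in posv].

Definition lambda_inf (g : ('I_n -> \bar R) -> ('I_n -> \bar R)) : \bar R :=
  ereal_sup [set (\big[mine/+oo%E]_i (g (fun j => (x j)%:E) i * ((x i)^-1)%:E))%E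
            | x in posv].

End Defs.

From HB Require Import structures.
From mathcomp Require Import all_boot all_order all_algebra.
From mathcomp Require Import all_classical all_reals all_analysis.
Import Order.TTheory GRing.Theory Num.Theory.
Local Open Scope classical_set_scope.
Local Open Scope ring_scope.

(* An eigenvector v > 0 of f with eigenvalue mu bounds both sides of the
   hypothesis by mu.  Since P^J_0 v <= v, monotonicity and homogeneity give
   f^J_0(v) <= f(v) = mu v, so r(f^J_0) <= mu; since P^{[n]\J}_oo v >= v,
   monotonicity gives f^{[n]\J}_oo(v) >= f(v) = mu v, so
   lambda(f^{[n]\J}_oo) >= mu. *)

Lemma ler_sum_term (R : numDomainType) (I : finType) (F : I -> R) (j : I) :
  (forall i, 0 <= F i) -> F j <= \sum_i F i.
Proof.
move=> F_ge0; rewrite (bigD1 j) //= lerDl.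
by apply: sumr_ge0 => i _; exact: F_ge0.
Qed.

Lemma ler_addgt0Mr (R : numFieldType) (a b c : R) :
  0 < c -> (forall e, 0 < e -> a <= b + e * c) -> a <= b.
Proof.
move=> c_gt0 le_ab; apply/ler_addgt0Pr => e e_gt0.
by have := le_ab (e / c); rewrite divfK ?gt_eqF // divr_gt0 //; exact.
Qed.

Section PositiveMaps.
Set Implicit Arguments. Unset Strict Implicit.
Variables (R : realType) (n : nat).
Implicit Types (x y v : 'I_n -> R) (J : {set 'I_n}).

Lemma r_nonneg_le (g : ('I_n -> R) -> 'I_n -> R) v (c : R) :
  posv v -> (forall i, g v i <= c * v i) -> (r_nonneg g <= c%:E)%E.
Proof.
move=> v_pos le_gv; apply: ge_ereal_inf; exists (\big[maxe/-oo]_i (g v i / v i)%:E)%E.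
  by exists v.
apply: (big_ind (fun z => z <= c%:E)%E) => [|z1 z2|i _].
- exact: leNye.
- by rewrite ge_max => -> ->.
- by rewrite lee_fin ler_pdivrMr.
Qed.

Lemma lambda_inf_ge (g : ('I_n -> \bar R) -> 'I_n -> \bar R) v (c : R) :
  posv v -> (forall i, (c * v i)%:E <= g (fun j => (v j)%:E) i)%E ->
  (c%:E <= lambda_inf g)%E.
Proof.
move=> v_pos le_gv; apply: le_ereal_sup_tmp.
exists (\big[mine/+oo]_i (g (fun j => (v j)%:E) i * ((v i)^-1)%:E))%E.
  by exists v.
apply: (big_ind (fun z => c%:E <= z)%E) => [|z1 z2|i _].
- exact: leey.
- by rewrite le_min => -> ->.
- have := lee_wpmul2r (x := ((v i)^-1)%:E) _ (le_gv i).
  by rewrite lee_fin invr_ge0 ltW // -EFinM mulfK ?gt_eqF //; exact.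
Qed.

Lemma shift_le_scale y (e : R) (j : 'I_n) : posv y -> 0 <= e ->
  y j + e <= (1 + e * \sum_k (y k)^-1) * y j.
Proof.
move=> y_pos e_ge0; rewrite mulrDl mul1r lerD2l -mulrA ler_peMr //.
rewrite -ler_pdivrMr // div1r.
by apply: ler_sum_term => k; rewrite invr_ge0 ltW.
Qed.

Variable f : ('I_n -> R) -> 'I_n -> R.
Hypotheses (f_pos : maps_pos f) (f_mono : order_preserving f).

Lemma extInf_ge (x : 'I_n -> \bar R) y : posv y ->
  (forall j, (y j)%:E <= x j)%E -> forall i, ((f y i)%:E <= extInf f x i)%E.
Proof.
move=> y_pos le_yx i; set t := \sum_k y k.
have le_yt j : y j <= t by apply: ler_sum_term => k; exact: ltW.
have le_y_trunc j : y j <= fine (mine (x j) t%:E).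
  move: (le_yx j); case: (x j) => [r||] /=.
  - by rewrite lee_fin -EFin_min /= le_min => ->; exact: le_yt.
  - by move=> _; exact: le_yt.
  - by rewrite leeNy_eq.
apply: le_ereal_sup_tmp; exists (f (fun j => fine (mine (x j) t%:E)) i)%:E.
  by exists t => //; exact: lt_le_trans (le_yt i).
by rewrite lee_fin; apply: f_mono => // j; exact: lt_le_trans (le_y_trunc j).
Qed.

Lemma fInf_ge J v : posv v ->
  forall i, ((f v i)%:E <= fInf f J (fun j => (v j)%:E) i)%E.
Proof.
move=> v_pos i; rewrite /fInf /PInf; case: ifP => _; last exact: leey.
apply: extInf_ge => // j; case: ifP => _ //; exact: leey.
Qed.

Hypothesis f_hom : homogeneous f.

Lemma ext0_le x y : (forall j, 0 <= x j) -> (forall j, x j <= y j) -> posv y ->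
  forall i, ext0 f x i <= f y i.
Proof.
move=> x_ge0 le_xy y_pos i; set s := \sum_k (y k)^-1.
have s_gt0 : 0 < s.
  apply: lt_le_trans (_ : (y i)^-1 <= s); first by rewrite invr_gt0.
  by apply: ler_sum_term => k; rewrite invr_ge0 ltW.
apply: (@ler_addgt0Mr _ _ _ (s * f y i)); first by rewrite mulr_gt0 ?f_pos.
move=> e e_gt0.
have scale_gt0 : 0 < 1 + e * s by rewrite addr_gt0 ?mulr_gt0.
have xe_pos : posv (fun j => x j + e) by move=> j; rewrite ltr_wpDl.
have lb : has_lbound [set f (fun j => x j + e') i | e' in [set e' : R | 0 < e']].
  by exists 0 => _ [e' e'_gt0 <-]; apply/ltW/f_pos => j; rewrite ltr_wpDl.
apply: le_trans (_ : f (fun j => (1 + e * s) * y j) i <= _).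
  apply: le_trans (_ : f (fun j => x j + e) i <= _); first by apply: ge_inf => //; exists e.
  apply: f_mono => // [j|j]; first exact: mulr_gt0.
  by rewrite (le_trans _ (shift_le_scale j y_pos (ltW e_gt0))) // lerD2r.
by rewrite f_hom // mulrDl mul1r mulrA.
Qed.

Lemma f0_le J v : posv v -> forall i, f0 f J v i <= f v i.
Proof.
move=> v_pos i; rewrite /f0 /P0; case: ifP => _; last exact/ltW/f_pos.
apply: ext0_le => // j; case: ifP => _ //; exact: ltW.
Qed.

End PositiveMaps.

Theorem theorem3p6 (R : realType) (n : nat)
  (f : ('I_n -> R) -> ('I_n -> R)) (J : {set 'I_n}) :
  maps_pos f -> order_preserving f -> homogeneous f ->
  J != finset.set0 -> J != finset.setT ->
  (lambda_inf (fInf f (~: J)) < r_nonneg (f0 f J))%E ->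
  ~ (exists (v : 'I_n -> R) (mu : R), posv v /\ forall i, f v i = mu * v i).
Proof.
move=> f_pos f_mono f_hom _ _ lt_lambda_r [v [mu [v_pos f_v]]].
have r_le_mu : (r_nonneg (f0 f J) <= mu%:E)%E.
  by apply: (r_nonneg_le v_pos) => i; rewrite -f_v; exact: f0_le.
have mu_le_lambda : (mu%:E <= lambda_inf (fInf f (~: J)))%E.
  by apply: (lambda_inf_ge v_pos) => i; rewrite -f_v; exact: fInf_ge.
by have := lt_le_trans lt_lambda_r (le_trans r_le_mu mu_le_lambda); rewrite ltxx.
Qed.
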